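(* Let $q$ be a prime dividing $|L/N|$, let $L_q\le L$ be such that $L_q/N$ is a Sylow $q$-subgroup of $L/N$, and let $\mu\in Z^1(L_q/N,F_K)$. Suppose there exists a function $\omega_q:K/N\to W_{(q)}$ such that for every $g\in L_q$ we have $\mu(gN)_{(q)}={}^g\omega_q\,\omega_q^{-1}\,\nu_g$ for some $\nu_g\in\Gamma$. Then $\bar\mu:L_q/N\to F_K/\Gamma$, $gN\mapsto\mu(gN)\Gamma$, is a 1-coboundary, i.e. there exists $\omega\in F_K$ with $\mu(gN)\Gamma={}^g\omega\,\omega^{-1}\Gamma$ for all $g\in L_q$.
   Context: $G$ is a profinite group, $N$ a finite index normal pro-$p$ subgroup of $G$, and $N\le K\trianglelefteq L\le G$; $\Gamma$ is a subgroup of $\mathrm{Lin}(K/N)$, the group of continuous homomorphisms $K\to\mathbb{C}^\times$ trivial on $N$. $F_K$ is the group (pointwise multiplication) of functions $K/N\to\mathbb{C}^\times$, with $L/N$ acting by ${}^gf(xN)=f(g^{-1}xgN)$. $W\le\mathbb{C}^\times$ is the group of roots of unity and $W_{(\ell)}$ its $\ell$-primary component. For each prime $\ell$ a homomorphism $\pi_\ell:\mathbb{C}^\times\to W_{(\ell)}$ restricting to the identity on $W_{(\ell)}$ is fixed, and for a function $f$ with values in $\mathbb{C}^\times$, $f_{(\ell)}:=\pi_\ell\circ f$; thus ${}^g(f_{(\ell)})=({}^gf)_{(\ell)}$. *)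

From mathcomp Require Import all_boot all_algebra all_fingroup all_solvable.
From mathcomp Require Import reals complex.
Set Implicit Arguments. Unset Strict Implicit. Unset Printing Implicit Defensive.
Import GRing.Theory Num.Theory.

Local Open Scope ring_scope.

Section Defs.
Variables (gT : finGroupType) (C : fieldType).

(* z lies in W_(q), the q-primary roots of unity *)
Definition primary_root (q : nat) (z : C) : Prop :=
  exists n : nat, z ^+ (q ^ n) = 1.

Definition primary_proj (q : nat) (pi : C -> C) : Prop :=
  [/\ forall z, z != 0 -> primary_root q (pi z),
      forall z w, z != 0 -> w != 0 -> pi (z * w) = pi z * pi w
    & forall z, primary_root q z -> pi z = z].

(* f : K -> C^x, i.e. an element of F_K (only values on K matter) *)
Definition FK_elem (K : {set gT}) (f : gT -> C) : Prop :=
  forall x, x \in K -> f x != 0.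

(* the action  (^g f)(x) = f(g^-1 x g) = f(x ^ g)  *)
Definition actF (g : gT) (f : gT -> C) : gT -> C := fun x => f (x ^ g)%g.

Definition is_lin (K : {set gT}) (nu : gT -> C) : Prop :=
  FK_elem K nu /\ {in K &, forall x y, nu (x * y)%g = nu x * nu y}.

Definition lin_subgroup (K : {set gT}) (Gam : (gT -> C) -> Prop) : Prop :=
  [/\ forall nu, Gam nu -> is_lin K nu,
      Gam (fun _ => 1),
      forall nu1 nu2, Gam nu1 -> Gam nu2 -> Gam (fun x => nu1 x * nu2 x)
    & forall nu, Gam nu -> Gam (fun x => (nu x)^-1)].

Definition cocycle1 (Lq K : {set gT}) (mu : gT -> gT -> C) : Prop :=
  (forall g, g \in Lq -> FK_elem K (mu g)) /\
  (forall g h, g \in Lq -> h \in Lq ->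
     forall x, x \in K -> mu (g * h)%g x = mu g x * actF g (mu h) x).

End Defs.

(** The norm Om(y) = prod_(h in Lq) mu(h)(y) satisfies mu(g)^n = Om / ^g Om with
    n = |Lq| by the cocycle identity, so for an n-th root rho of Om^-1 the twist
    mu(g) ^g rho^-1 rho is an n-th root of unity.  As n is a power of q, this
    root of unity is fixed by pi, hence mu(g) and pi(mu(g)) differ exactly by the
    coboundary of rho / pi(rho); combined with the hypothesis on pi(mu(g)), the
    function w = wq rho / pi(rho) trivialises mu modulo Gam. *)

From mathcomp Require Import all_boot all_algebra all_fingroup all_solvable.
From mathcomp Require Import reals complex.
From mathcomp Require Import ring.
Set Implicit Arguments. Unset Strict Implicit. Unset Printing Implicit Defensive.
Import GRing.Theory Num.Theory.
Local Open Scope ring_scope.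

Lemma primary_root_neq0 (C : fieldType) (q : nat) (z : C) :
  (0 < q)%N -> primary_root q z -> z != 0.
Proof.
move=> q_gt0 [k zk1]; apply: contra_eq_neq zk1 => ->.
by rewrite expr0n expn_eq0 eqn0Ngt q_gt0 eq_sym oner_eq0.
Qed.

Section PrimaryProjection.

Variables (C : fieldType) (q : nat) (pi : C -> C).
Hypotheses (q_gt0 : (0 < q)%N) (pi_proj : primary_proj q pi).

Lemma primary_proj_neq0 (z : C) : z != 0 -> pi z != 0.
Proof. by case: pi_proj => pi_root _ _ /pi_root; apply: primary_root_neq0. Qed.

Lemma primary_projM (z w : C) : z != 0 -> w != 0 -> pi (z * w) = pi z * pi w.
Proof. by case: pi_proj => _ piM _; apply: piM. Qed.

Lemma primary_proj_id (z : C) : primary_root q z -> pi z = z.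
Proof. by case: pi_proj => _ _; apply. Qed.

Lemma primary_projV (z : C) : z != 0 -> pi z^-1 = (pi z)^-1.
Proof.
move=> z_neq0; have pi1 : pi 1 = 1 by apply: primary_proj_id; exists 0%N.
apply: (mulfI (primary_proj_neq0 z_neq0)).
by rewrite -primary_projM ?invr_eq0 // !mulfV ?primary_proj_neq0.
Qed.

Lemma primary_proj_twist (eps a b : C) :
    primary_root q eps -> a != 0 -> b != 0 ->
  let z := eps * b / a in z = pi z * (b / pi b) / (a / pi a).
Proof.
move=> eps_q a_neq0 b_neq0 z.
have eps_neq0 := primary_root_neq0 q_gt0 eps_q.
have pi_z : pi z = eps * pi b / pi a.
  by rewrite !primary_projM ?mulf_neq0 ?invr_eq0 // primary_proj_id ?primary_projV.
have := primary_proj_neq0 a_neq0; have := primary_proj_neq0 b_neq0.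
by rewrite pi_z /z => pib_neq0 pia_neq0; field; apply/and3P.
Qed.

End PrimaryProjection.

Section CocycleNorm.

Variables (gT : finGroupType) (C : numClosedFieldType).
Variables (K Lq : {group gT}) (mu : gT -> gT -> C).
Hypotheses (mu_cocycle : cocycle1 Lq K mu) (nKLq : Lq \subset 'N(K)%g).

Let mu_neq0 : forall g, g \in Lq -> FK_elem K (mu g).
Proof. by case: mu_cocycle. Qed.

Definition cocycle_norm (y : gT) : C := \prod_(h in Lq) mu h y.

Definition cocycle_root (y : gT) : C := #|Lq|.-root (cocycle_norm y)^-1.

Lemma cocycle_norm_neq0 y : y \in K -> cocycle_norm y != 0.
Proof. by move=> yK; apply/prodf_neq0 => h hLq; apply: mu_neq0. Qed.

Lemma cocycle_expE g x : g \in Lq -> x \in K ->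
  mu g x ^+ #|Lq| * cocycle_norm (x ^ g)%g = cocycle_norm x.
Proof.
move=> gLq xK; rewrite /cocycle_norm -prodr_const -big_split /=.
rewrite [RHS](reindex_inj (mulgI g)) /= (eq_bigl _ _ (fun h => groupMl h gLq)).
by apply: eq_bigr => h hLq; case: mu_cocycle => _ ->.
Qed.

Lemma cocycle_root_expE y : cocycle_root y ^+ #|Lq| = (cocycle_norm y)^-1.
Proof. exact/rootCK/cardG_gt0. Qed.

Lemma cocycle_root_neq0 y : y \in K -> cocycle_root y != 0.
Proof.
move=> yK; apply: contraTneq (cocycle_norm_neq0 yK) => root0.
by rewrite negbK -invr_eq0 -cocycle_root_expE root0 expf_eq0 cardG_gt0 eqxx.
Qed.

Lemma cocycle_root_twist g x : g \in Lq -> x \in K ->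
  exists2 eps, eps ^+ #|Lq| = 1 &
    mu g x = eps * actF g cocycle_root x / cocycle_root x.
Proof.
move=> gLq xK; have xgK : (x ^ g)%g \in K.
  by rewrite memJ_norm ?(subsetP nKLq).
have := cocycle_root_neq0 xK; have := cocycle_root_neq0 xgK.
rewrite /actF => rxg_neq0 rx_neq0.
exists (mu g x * cocycle_root x / cocycle_root (x ^ g)%g); last first.
  by field; rewrite rxg_neq0 rx_neq0.
rewrite !exprMn exprVn !cocycle_root_expE invrK -(cocycle_expE gLq xK).
have := cocycle_norm_neq0 xgK; have := mu_neq0 gLq xK => mugx_neq0 nxg_neq0.
by field; rewrite nxg_neq0 expf_neq0.
Qed.

End CocycleNorm.

Theorem lemma3p2 (gT : finGroupType) (R : realType) (K L Lq : {group gT})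
  (q : nat) (Gam : (gT -> R[i]) -> Prop) (pi : R[i] -> R[i])
  (mu : gT -> gT -> R[i]) :
  (K <| L)%g ->
  lin_subgroup K Gam ->
  primary_proj q pi ->
  prime q -> (q %| #|L|)%N ->
  (Lq \in 'Syl_q(L))%g ->
  cocycle1 Lq K mu ->
  (exists wq : gT -> R[i],
     (forall x, x \in K -> primary_root q (wq x)) /\
     (forall g, g \in Lq -> exists nu, Gam nu /\
        forall x, x \in K -> pi (mu g x) = actF g wq x * (wq x)^-1 * nu x)) ->
  exists w : gT -> R[i], FK_elem K w /\
    (forall g, g \in Lq -> exists nu, Gam nu /\
        forall x, x \in K -> mu g x = actF g w x * (w x)^-1 * nu x).
Proof.
move=> nKL _ pi_proj q_pr _ Lq_syl mu_cocycle [wq [wq_q pi_mu]].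
have q_gt0 := prime_gt0 q_pr.
move: Lq_syl; rewrite inE => /and3P[sLqL qLq _].
have nKLq : Lq \subset 'N(K)%g := subset_trans sLqL (normal_norm nKL).
pose rho := cocycle_root Lq mu.
have wq_neq0 y : y \in K -> wq y != 0 by move/wq_q/primary_root_neq0; apply.
have rho_neq0 y : y \in K -> rho y != 0 by apply: cocycle_root_neq0.
have pirho_neq0 y : y \in K -> pi (rho y) != 0.
  by move/rho_neq0/(primary_proj_neq0 q_gt0 pi_proj).
exists (fun y => wq y * (rho y / pi (rho y))); split.
  by move=> y yK; rewrite !mulf_neq0 ?invr_eq0 ?wq_neq0 ?rho_neq0 ?pirho_neq0.
move=> g gLq; have [nu [Gam_nu pi_mu_g]] := pi_mu g gLq.
exists nu; split => // x xK.
have xgK : (x ^ g)%g \in K by rewrite memJ_norm ?(subsetP nKLq).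
have [eps eps_unity mu_gx] := cocycle_root_twist mu_cocycle nKLq gLq xK.
have eps_q : primary_root q eps.
  by exists (logn q #|Lq|); rewrite -(card_pgroup qLq).
rewrite mu_gx (primary_proj_twist q_gt0 pi_proj eps_q) ?rho_neq0 //.
rewrite -mu_gx pi_mu_g // /actF -/rho.
by field; rewrite ?pirho_neq0 ?rho_neq0 ?wq_neq0.
Qed.
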